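(* Let $q$ be prime and let $S\in\mathbb{Z}_q^{k\times 2n}$ be the generator matrix of a non-degenerate stabilizer code $[[n,n-k,d]]_q$. Let $M\in\mathbb{Z}^{k\times 2n}$ be an invariant form of this code (i.e. $M\equiv S\pmod q$ and the rows of $M$ pairwise have integer symplectic product $0$), and let $B$ be the maximal absolute value of an entry of $M$. Set $$p^*=B^{2(d-1)}\,\bigl(2(d-1)\bigr)^{d-1}.$$ Then for every prime $p>p^*$, the code over $p$ levels given by the generator matrix $M \bmod p$, with parameters $[[n,n-k,d']]_p$, has distance $d'\ge d$.
   Context: For a prime $r$, $n$-qudit Paulis over $r$ levels (up to phase) are represented as vectors $(a|b)\in\mathbb{Z}_r^{2n}$ (exponents of $X$ and $Z$ on each qudit). The symplectic product of $u=(u_x|u_z)$ and $v=(v_x|v_z)$ is $u\odot v=\sum_{l=1}^n (v_{z,l}u_{x,l}-v_{x,l}u_{z,l})$, computed mod $r$ (or over $\mathbb{Z}$ for integer vectors). The weight of $(a|b)$ is the number of indices $l$ with $(a_l,b_l)\neq(0,0)$. For a stabilizer code over $r$ levels with generator matrix $G$ (rows pairwise symplectically orthogonal mod $r$), the distance is the minimum weight of a nonzero $e\in\mathbb{Z}_r^{2n}$ with $e\odot g\equiv 0\pmod r$ for every row $g$ of $G$ (an undetectable error). The code is non-degenerate if every non-identity element of the stabilizer group has weight at least $d$. The code has $k$ generators on $n$ qudits, hence $n-k$ logical qudits; notation $[[n,n-k,d]]_q$. *)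

(* Paulis on n qudits are integer row vectors of length n + n:
   index (lshift n l) is the X-exponent on qudit l, (rshift n l) the Z-exponent.
   Vectors over Z_r are represented by integer vectors, read modulo r. *)
From HB Require Import structures.
From mathcomp Require Import all_boot all_order all_algebra.
Set Implicit Arguments. Unset Strict Implicit. Unset Printing Implicit Defensive.
Import Order.TTheory GRing.Theory Num.Theory.
Local Open Scope ring_scope.

Definition sympl (n : nat) (u v : 'rV[int]_(n + n)) : int :=
  \sum_(l < n) (v ord0 (rshift n l) * u ord0 (lshift n l)
                - v ord0 (lshift n l) * u ord0 (rshift n l)).

Definition wt (r : nat) (n : nat) (u : 'rV[int]_(n + n)) : nat :=
  #|[set l : 'I_n | ((u ord0 (lshift n l) %% r%:Z)%Z != 0)
                  || ((u ord0 (rshift n l) %% r%:Z)%Z != 0)]|.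

Definition nonzero_mod (r : nat) (m : nat) (u : 'rV[int]_m) : bool :=
  [exists j, (u ord0 j %% r%:Z)%Z != 0].

Definition stabilizer_gen (r k n : nat) (G : 'M[int]_(k, n + n)) : Prop :=
  forall i j : 'I_k, (sympl (row i G) (row j G) %% r%:Z)%Z = 0.

Definition undetectable (r k n : nat) (G : 'M[int]_(k, n + n))
    (e : 'rV[int]_(n + n)) : Prop :=
  nonzero_mod r e /\ forall i : 'I_k, (sympl e (row i G) %% r%:Z)%Z = 0.

Definition has_distance (r k n : nat) (G : 'M[int]_(k, n + n)) (d : nat) : Prop :=
  (exists e, undetectable r G e /\ wt r e = d) /\
  (forall e, undetectable r G e -> (d <= wt r e)%N).

Definition nondeg_code (r k n : nat) (G : 'M[int]_(k, n + n)) (d : nat) : Prop :=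
  forall c : 'rV[int]_k, nonzero_mod r (c *m G) -> (d <= wt r (c *m G))%N.

Definition invariant_form (q k n : nat) (S M : 'M[int]_(k, n + n)) : Prop :=
  (forall i j, ((M i j - S i j) %% q%:Z)%Z = 0) /\
  (forall i j : 'I_k, sympl (row i M) (row j M) = 0).

Definition maxabs (k m : nat) (M : 'M[int]_(k, m)) : nat :=
  \max_(i < k) \max_(j < m) `|M i j|%N.

(* Let e be undetectable over p levels with weight below d, and J its support, so
   |J| <= 2(d-1).  Over q the columns indexed by J of the matrix of linear forms
   e |-> e (.) g, g a row of M, are independent: a dependency would be an
   undetectable error over q of weight below d.  Hence some |J| x |J| minor N is
   nonzero mod q, so det N is a nonzero integer, and Hadamard's inequality gives
   |det N| <= (|J| B^2)^(|J|/2) <= p*.  As p > p*, N stays invertible mod p, and it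
   annihilates the restriction of e to J mod p; so e vanishes mod p, a contradiction. *)

From HB Require Import structures.
From mathcomp Require Import all_boot all_order all_algebra.
Import Order.TTheory GRing.Theory Num.Theory.
From mathcomp Require Import zify.
Set Implicit Arguments. Unset Strict Implicit. Unset Printing Implicit Defensive.
Local Open Scope ring_scope.

Section Hadamard.
Variable R : realFieldType.

Definition gram r m (N : 'M[R]_(r, m)) : 'M[R]_m := N^T *m N.

Lemma gram_diagE r m (N : 'M[R]_(r, m)) i : gram N i i = \sum_j N j i ^+ 2.
Proof. by rewrite !mxE; apply: eq_bigr => j _; rewrite !mxE expr2. Qed.

Lemma gram_diag_ge0 r m (N : 'M[R]_(r, m)) i : 0 <= gram N i i.
Proof. by rewrite gram_diagE sumr_ge0 // => j _; apply: sqr_ge0. Qed.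

Lemma gram_diag_eq0 r m (N : 'M[R]_(r, m)) i : (gram N i i == 0) = (col i N == 0).
Proof.
rewrite gram_diagE psumr_eq0 => [|j _]; last exact: sqr_ge0.
apply/allP/idP => [N0 | /eqP Ni0 j _]; last first.
  have := congr1 (fun A : 'cV[R]_r => A j 0) Ni0; rewrite !mxE => ->.
  by rewrite expr0n mulr0n eqxx.
apply/eqP/colP => j; rewrite !mxE; apply/eqP.
by rewrite -sqrf_eq0; apply: (implyP (N0 j (mem_index_enum j))).
Qed.

Lemma gram_mulmx r m p (N : 'M[R]_(r, m)) (U : 'M[R]_(m, p)) :
  gram (N *m U) = U^T *m gram N *m U.
Proof. by rewrite /gram trmx_mul !mulmxA. Qed.

Lemma gram_row_mx r m1 m2 (A : 'M[R]_(r, m1)) (B : 'M[R]_(r, m2)) :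
  gram (row_mx A B) = block_mx (gram A) (A^T *m B) (B^T *m A) (gram B).
Proof. by rewrite /gram tr_row_mx mul_col_row. Qed.

Lemma gramD_orth r m (A B : 'M[R]_(r, m)) :
  A^T *m B = 0 -> gram (A + B) = gram A + gram B.
Proof.
move=> AB0; have BA0 : B^T *m A = 0 by rewrite -[A]trmxK -trmx_mul AB0 trmx0.
by rewrite /gram !mulmxDr [(A + B)^T]linearD /= !mulmxDl AB0 BA0 addr0 add0r.
Qed.

Lemma orth_split r m (a : 'cV[R]_r) (N : 'M[R]_(r, m)) :
  exists C : 'rV[R]_m, a^T *m (N - a *m C) = 0.
Proof.
have [a0 | a_neq0] := eqVneq (gram a 0 0) 0.
  exists 0; move/eqP: a0; rewrite gram_diag_eq0 => /eqP a0.
  by rewrite -[a](col_id 0) a0 trmx0 mul0mx.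
exists ((gram a 0 0)^-1 *: (a^T *m N)).
rewrite mulmxBr mulmxA -/(gram a) {1}[gram a]mx11_scalar mul_scalar_mx scalerA.
by rewrite mulfV // scale1r subrr.
Qed.

Theorem hadamard_gram r m (N : 'M[R]_(r, m)) :
  \det (gram N) <= \prod_i gram N i i.
Proof.
elim: m N => [|m IH] N; first by rewrite det_mx00 big_ord0.
move: N; change (forall N : 'M[R]_(r, 1 + m),
  \det (gram N) <= \prod_(i < 1 + m) gram N i i) => N.
rewrite -(hsubmxK N); move: (lsubmx N) (rsubmx N) => a N2.
have [C orthC] := orth_split a N2; set N' := N2 - a *m C in orthC.
have N'a0 : N'^T *m a = 0 by rewrite -[a]trmxK -trmx_mul orthC trmx0.
have row_mxE : row_mx a N2 = row_mx a N' *m block_mx 1%:M C 0 1%:M.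
  by rewrite mul_row_block !mulmx1 !mulmx0 addr0 /N' addrC subrK.
have det_gramE : \det (gram (row_mx a N2)) = gram a 0 0 * \det (gram N').
  rewrite row_mxE gram_mulmx !det_mulmx det_tr det_ublock !det1 !mul1r mulr1.
  by rewrite gram_row_mx orthC N'a0 det_ublock det_mx11.
have gramN2 : gram N2 = gram N' + gram (a *m C).
  by rewrite -gramD_orth ?mulmxA ?N'a0 ?mul0mx // /N' subrK.
rewrite det_gramE big_split_ord big_ord1 /= gram_row_mx block_mxEul.
under eq_bigr do rewrite block_mxEdr.
rewrite ler_wpM2l ?gram_diag_ge0 //; apply: le_trans (IH N') _.
apply: ler_prod => i _; rewrite gram_diag_ge0 gramN2 [X in _ <= X]mxE lerDl.
exact: gram_diag_ge0.
Qed.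

End Hadamard.

Lemma natr_absz_sqr (R : numDomainType) (z : int) : (`|z| ^ 2)%:R = z%:~R ^+ 2 :> R.
Proof. by rewrite natrX natr_absz -rmorphXn /= real_normK ?num_real // rmorphXn. Qed.

Lemma hadamard_intmx m (N : 'M[int]_m) (B : nat) :
  (forall i j, (`|N i j| <= B)%N) -> (`|\det N| ^ 2 <= (m * B ^ 2) ^ m)%N.
Proof.
move=> NB; pose Nq : 'M[rat]_m := map_mx (intmul 1) N.
have detE : \det (gram Nq) = (\det N)%:~R ^+ 2.
  by rewrite /gram det_mulmx det_tr det_map_mx expr2.
rewrite -(ler_nat rat) natr_absz_sqr -detE; apply: le_trans (hadamard_gram _) _.
rewrite natrX -[m in _ ^+ m]card_ord -prodr_const.
apply: ler_prod => i _; rewrite gram_diag_ge0 gram_diagE natrM mulr_natl.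
rewrite -[m in _ *+ m]card_ord -sumr_const.
apply: ler_sum => j _; rewrite mxE -natr_absz_sqr ler_nat leq_exp2r //.
Qed.

Lemma hadamard_bound_lt (D m B h p : nat) :
  (D ^ 2 <= (m * B ^ 2) ^ m)%N -> (m <= 2 * h)%N ->
  (B ^ (2 * h) * (2 * h) ^ h < p)%N -> (1 < p)%N -> (D < p)%N.
Proof.
move=> hD mh hp p_gt1; rewrite -(@ltn_exp2r _ _ 2) //; apply: leq_ltn_trans hD _.
have [mB0 | mB_gt0] := posnP (m * B ^ 2).
  rewrite mB0; apply: (@leq_ltn_trans 1%N).
    by case: m {mh mB0} => [|k]; rewrite // exp0n.
  by rewrite (leq_trans p_gt1) // -{1}(expn1 p) leq_pexp2l // ltnW.
have hB_ge : (m * B ^ 2 <= 2 * h * B ^ 2)%N by rewrite leq_mul2r mh orbT.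
apply: (@leq_ltn_trans ((2 * h * B ^ 2) ^ (2 * h))).
  apply: leq_trans (leq_pexp2l (leq_trans mB_gt0 hB_ge) mh).
  by rewrite leq_exp2r // lt0n; apply: contraTneq mB_gt0 => ->.
(* (2h B^2)^(2h) is the square of the bound p* of the statement. *)
rewrite -(@ltn_exp2r _ _ 2) // in hp; apply: leq_trans hp; rewrite ltnS.
have : (h * 2 = 2 * h)%N := mulnC h 2.
set L := (2 * h)%N; clearbody L => hL.
by rewrite !expnMn -!expnM hL mulnC expnM.
Qed.

Lemma row_full_col_inj (F : fieldType) k m (A : 'M[F]_(k, m)) :
  (forall x : 'cV_m, A *m x = 0 -> x = 0) -> row_full A.
Proof.
move=> injA; rewrite -cokermx_eq0; apply/eqP/matrixP => i j; rewrite mxE.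
have := injA (col j (cokermx A)); rewrite [in A *m _]colE mulmxA mulmx_coker mul0mx.
by move=> /(_ erefl) /(congr1 (fun x : 'cV_m => x i 0)); rewrite !mxE.
Qed.

Section Restriction.
Variables (R : pzSemiRingType) (N : nat) (J : {set 'I_N}).

Local Notation enumJ := (enum_val (A := J)).

Definition ext0 (x : 'cV[R]_#|J|) : 'cV[R]_N := \col_j \sum_(t | enum_val t == j) x t 0.

Lemma ext0_out x j : j \notin J -> ext0 x j 0 = 0.
Proof.
move=> jJ; rewrite mxE big_pred0 // => t; apply: contraNF jJ => /eqP <-.
exact: enum_valP.
Qed.

Lemma rowsub_ext0 x : rowsub enumJ (ext0 x) = x.
Proof.
apply/matrixP => t i; rewrite (ord1 i) !mxE.
by rewrite (big_pred1 t) // => s; rewrite (inj_eq enum_val_inj).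
Qed.

Lemma mulmx_colsub_supp k (A : 'M[R]_(k, N)) (v : 'cV[R]_N) :
  (forall j, j \notin J -> v j 0 = 0) ->
  A *m v = colsub enumJ A *m rowsub enumJ v.
Proof.
move=> v_out; apply/matrixP => i l; rewrite (ord1 l) !mxE (bigID (mem J)) /=.
rewrite [X in _ + X]big1 ?addr0 => [|j /v_out ->]; last by rewrite mulr0.
by rewrite big_enum_val; apply: eq_bigr => t _; rewrite !mxE.
Qed.

Lemma supp_rowsub_eq0 (v : 'cV[R]_N) :
  (forall j, j \notin J -> v j 0 = 0) -> rowsub enumJ v = 0 -> v = 0.
Proof.
move=> v_out v_J0; apply/matrixP => j l; rewrite (ord1 l) mxE.
have [jJ | /v_out //] := boolP (j \in J).
have := congr1 (fun w : 'cV[R]_#|J| => w (enum_rank_in jJ j) 0) v_J0.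
by rewrite !mxE enum_rankK_in.
Qed.

End Restriction.

Definition modmx (r : nat) m1 m2 (A : 'M[int]_(m1, m2)) : 'M['F_r]_(m1, m2) :=
  map_mx (intmul 1) A.

Lemma modz_eq0_Fp (r : nat) (z : int) :
  prime r -> ((z %% r%:Z)%Z == 0) = (z%:~R == 0 :> 'F_r).
Proof. by move=> r_pr; rewrite -(dvdz_pcharf (pchar_Fp r_pr)); apply/eqP/dvdz_mod0P. Qed.

Lemma modmx_unit (r m : nat) (N : 'M[int]_m) :
  prime r -> (modmx r N \in unitmx) = ((\det N %% r%:Z)%Z != 0).
Proof. by move=> r_pr; rewrite unitmxE unitfE det_map_mx modz_eq0_Fp. Qed.

Lemma modz_neq0 (z : int) (r : nat) : z != 0 -> (`|z| < r)%N -> (z %% r%:Z)%Z != 0.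
Proof.
move=> z_neq0 z_lt; apply/negP => /eqP/dvdz_mod0P; rewrite dvdzE absz_nat.
by move/dvdn_leq; rewrite absz_gt0 z_neq0 leqNgt z_lt => /(_ isT).
Qed.

Lemma modmx_colsub r k m m' (g : 'I_m' -> 'I_m) (A : 'M[int]_(k, m)) :
  modmx r (colsub g A) = colsub g (modmx r A).
Proof. by apply/matrixP => i j; rewrite !mxE. Qed.

Lemma modmx_congr r m1 m2 (A B : 'M[int]_(m1, m2)) :
  prime r -> (forall i j, ((A i j - B i j) %% r%:Z)%Z = 0) -> modmx r A = modmx r B.
Proof.
move=> r_pr AB; apply/matrixP => i j; rewrite !mxE; apply/eqP.
by rewrite -subr_eq0 -rmorphB -modz_eq0_Fp // AB.
Qed.

Theorem modmx_col_inj_transfer (q p k m h B : nat) (A : 'M[int]_(k, m)) :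
  prime q -> prime p -> (forall i j, (`|A i j| <= B)%N) -> (m <= 2 * h)%N ->
  (B ^ (2 * h) * (2 * h) ^ h < p)%N ->
  (forall x : 'cV['F_q]_m, modmx q A *m x = 0 -> x = 0) ->
  forall v : 'cV['F_p]_m, modmx p A *m v = 0 -> v = 0.
Proof.
move=> q_pr p_pr AB mh hp injq v Av0.
have fullq := row_full_col_inj injq.
pose N := rowsub (fullrankfun fullq) A.
have modN r : modmx r N = rowsub (fullrankfun fullq) (modmx r A).
  by apply/matrixP => i j; rewrite !mxE.
have detNq : (\det N %% q%:Z)%Z != 0 by rewrite -modmx_unit // modN fullrowsub_unit.
have detN_neq0 : \det N != 0 by apply: contraNneq detNq => ->; rewrite mod0z.
have detN_lt : (`|\det N| < p)%N.
  apply: hadamard_bound_lt mh hp (prime_gt1 p_pr).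
  by apply: hadamard_intmx => i j; rewrite mxE.
have Np_unit : modmx p N \in unitmx by rewrite modmx_unit // modz_neq0.
have Nv0 : modmx p N *m v = 0.
  by rewrite modN mul_rowsub_mx Av0; apply/matrixP => i j; rewrite !mxE.
by rewrite -(mulKmx Np_unit v) Nv0 mulmx0.
Qed.

Definition sympl_mx k n (M : 'M[int]_(k, n + n)) : 'M[int]_(k, n + n) :=
  row_mx (rsubmx M) (- lsubmx M).

Lemma sympl_mxE k n (M : 'M[int]_(k, n + n)) (e : 'rV[int]_(n + n)) i :
  sympl e (row i M) = (sympl_mx M *m e^T) i 0.
Proof.
rewrite /sympl !mxE big_split_ord big_split /=; congr (_ + _); apply: eq_bigr => l _.
  by rewrite !mxE (unsplitK (inl l) : split _ = _) !mxE mulrC.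
by rewrite !mxE (unsplitK (inr l) : split _ = _) !mxE mulNr mulrC.
Qed.

Lemma sympl_mx_bound k n (M : 'M[int]_(k, n + n)) i j :
  (`|sympl_mx M i j| <= maxabs M)%N.
Proof.
rewrite /maxabs; apply: leq_trans (leq_bigmax i).
rewrite -[j](splitK j); case: (split j) => l /=;
  rewrite ?row_mxEl ?row_mxEr !mxE ?abszN;
  exact: (leq_bigmax (F := fun j => `|M i j|%N)).
Qed.

Lemma modmx_sympl_mx r k n (S M : 'M[int]_(k, n + n)) :
  modmx r S = modmx r M -> modmx r (sympl_mx S) = modmx r (sympl_mx M).
Proof. by rewrite /modmx /sympl_mx !map_row_mx !map_mxN !map_rsubmx !map_lsubmx => ->. Qed.

Definition supp_mod (r m : nat) (u : 'rV[int]_m) : {set 'I_m} :=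
  [set j | (u ord0 j %% r%:Z)%Z != 0].

Lemma card_supp_mod_le_wt r n (u : 'rV[int]_(n + n)) :
  (#|supp_mod r u| <= 2 * wt r u)%N.
Proof.
rewrite /wt mul2n -addnn; set W := [set l | _].
have supp_sub : supp_mod r u \subset lshift n @: W :|: @rshift n n @: W.
  apply/subsetP => j; rewrite inE -[j](splitK j).
  by case: (split j) => l /= ul; rewrite !inE; apply/orP; [left | right];
    apply: imset_f; rewrite inE ul ?orbT.
apply: leq_trans (subset_leq_card supp_sub) _.
by apply: leq_trans (leq_card_setU _ _) _; rewrite leq_add ?leq_imset_card.
Qed.

Lemma wt_le_subset r s n (u v : 'rV[int]_(n + n)) :
  supp_mod r u \subset supp_mod s v -> (wt r u <= wt s v)%N.
Proof.
move=> /subsetP uv; apply: subset_leq_card; apply/subsetP => l; rewrite !inE.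
have uv' j : (u ord0 j %% r%:Z)%Z != 0 -> (v ord0 j %% s%:Z)%Z != 0.
  by move=> uj; have := uv j; rewrite !inE; apply.
by case/orP => /uv' ->; rewrite ?orbT.
Qed.

Lemma nonzero_modE r m (u : 'rV[int]_m) :
  prime r -> nonzero_mod r u = (modmx r u != 0).
Proof.
move=> r_pr; apply/idP/idP => [/existsP [j] | u_neq0].
  rewrite modz_eq0_Fp // => uj; apply: contraNneq uj => u0.
  by have := congr1 (fun w : 'rV_m => w ord0 j) u0; rewrite !mxE => ->.
apply: contraR u_neq0 => /existsPn u0; apply/eqP/matrixP => i j.
by rewrite (ord1 i) !mxE; apply/eqP; rewrite -modz_eq0_Fp // -[_ == 0]negbK u0.
Qed.

Lemma undetectableE r k n (G : 'M[int]_(k, n + n)) e : prime r ->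
  undetectable r G e <->
  modmx r e != 0 /\ modmx r (sympl_mx G) *m (modmx r e)^T = 0.
Proof.
move=> r_pr; rewrite /undetectable nonzero_modE //.
have symplE i : ((sympl e (row i G) %% r%:Z)%Z = 0) <->
                (modmx r (sympl_mx G) *m (modmx r e)^T) i 0 = 0.
  rewrite sympl_mxE /modmx map_trmx -map_mxM [in X in _ <-> X]mxE.
  by split => /eqP h; apply/eqP; move: h; rewrite modz_eq0_Fp.
split=> -[e_neq0 orth]; split=> //.
  by apply/matrixP => i l; rewrite (ord1 l) [RHS]mxE; apply/symplE.
by move=> i; apply/symplE; rewrite orth mxE.
Qed.

Lemma distance_col_inj q k n d (G : 'M[int]_(k, n + n)) (J : {set 'I_(n + n)}) :
  prime q -> (forall e, undetectable q G e -> (d <= wt q e)%N) ->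
  (forall f, supp_mod q f \subset J -> (wt q f < d)%N) ->
  forall x : 'cV['F_q]_#|J|,
    modmx q (colsub (enum_val (A := J)) (sympl_mx G)) *m x = 0 -> x = 0.
Proof.
move=> q_pr dist lowJ x Ax0; apply/eqP; apply: contraT => x_neq0.
pose f : 'rV[int]_(n + n) := (map_mx (fun a : 'F_q => (a : nat)%:Z) (ext0 x))^T.
have modf : (modmx q f)^T = ext0 x.
  by apply/matrixP => j l; rewrite !mxE; apply: natr_Zp.
have f_supp : supp_mod q f \subset J.
  apply/subsetP => j; rewrite inE modz_eq0_Fp //; apply: contraR => /(ext0_out x) xj.
  by have := congr1 (fun w : 'cV_(n + n) => w j 0) modf; rewrite xj !mxE => ->.
have : undetectable q G f.
  apply/undetectableE => //; split.
    apply: contra x_neq0 => /eqP f0; rewrite -(rowsub_ext0 x) -modf f0 trmx0.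
    by apply/eqP/matrixP => t l; rewrite !mxE.
  rewrite modf (mulmx_colsub_supp _ (ext0_out x)) rowsub_ext0 -Ax0.
  by congr (_ *m _); apply/matrixP => i t; rewrite !mxE.
by move/dist; rewrite leqNgt lowJ.
Qed.

Theorem theorem3 (q n k d : nat) (S M : 'M[int]_(k, n + n)) :
  prime q ->
  stabilizer_gen q S ->
  has_distance q S d ->
  nondeg_code q S d ->
  invariant_form q S M ->
  forall p : nat, prime p ->
    (maxabs M ^ (2 * (d - 1)) * (2 * (d - 1)) ^ (d - 1) < p)%N ->
    stabilizer_gen p M /\
    forall e : 'rV[int]_(n + n), undetectable p M e -> (d <= wt p e)%N.
Proof.
move=> q_pr _ [_ dist] _ [MS M_orth] p p_pr hp.
split=> [i j | e]; first by rewrite M_orth mod0z.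
rewrite undetectableE // => -[e_neq0 e_orth]; rewrite leqNgt; apply/negP => wt_lt.
set J := supp_mod p e; set A := colsub (enum_val (A := J)) (sympl_mx M).
have e_out j : j \notin J -> (modmx p e)^T j 0 = 0.
  by rewrite inE negbK modz_eq0_Fp // !mxE => /eqP.
have injq (x : 'cV_#|J|) : modmx q A *m x = 0 -> x = 0.
  rewrite modmx_colsub (modmx_sympl_mx (modmx_congr q_pr MS)) -modmx_colsub.
  apply: (distance_col_inj q_pr dist) => f /wt_le_subset fe.
  exact: leq_ltn_trans fe wt_lt.
have J_le : (#|J| <= 2 * (d - 1))%N.
  by apply: leq_trans (card_supp_mod_le_wt p e) _; lia.
have A_bound i j : (`|A i j| <= maxabs M)%N by rewrite mxE sympl_mx_bound.
have injp := modmx_col_inj_transfer q_pr p_pr A_bound J_le hp injq.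
have e0 : (modmx p e)^T = 0.
  apply: (supp_rowsub_eq0 e_out); apply: injp.
  by rewrite modmx_colsub -mulmx_colsub_supp.
by move: e_neq0; rewrite -[modmx p e]trmxK e0 trmx0 eqxx.
Qed.
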